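(* Let $\mathsf{H}^\ast$ be a clique coverage of $\mathrm{G}$ with $|\mathsf{H}^\ast|=d$, let $(\mathrm{Q}_1,\dots,\mathrm{Q}_d)$ be an ordering of $\mathsf{H}^\ast$ in which every clique appears exactly once, and let $\mathbf{M}_{\mathrm{C}}$, $\mathrm{C}\in\mathsf{H}^\ast$, be clique-gossip matrices with arbitrary blocks. If the generalized line graph $\mathcal{L}(\mathsf{H}^\ast)$ contains no cycle, then for every permutation $\pi$ of $\{1,\dots,d\}$ the matrices $\mathbf{F}=\mathbf{M}_{\mathrm{Q}_d}\cdots\mathbf{M}_{\mathrm{Q}_1}$ and $\mathbf{F}_\pi=\mathbf{M}_{\mathrm{Q}_{\pi(d)}}\cdots\mathbf{M}_{\mathrm{Q}_{\pi(1)}}$ have the same characteristic polynomial.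
   Context: $\mathrm{G}=(\mathrm{V},\mathrm{E})$ is a simple undirected graph with $\mathrm{V}=\{1,\dots,n\}$; $\mathrm{G}[\mathrm{S}]$ is the induced subgraph on $\mathrm{S}\subset\mathrm{V}$. A clique is a subset $\mathrm{C}\subset\mathrm{V}$ with $\mathrm{G}[\mathrm{C}]$ complete. A clique coverage of $\mathrm{G}$ is a finite set $\mathsf{H}^\ast$ of cliques whose union is $\mathrm{V}$ and whose union graph $\bigcup_{\mathrm{C}\in\mathsf{H}^\ast}\mathrm{G}[\mathrm{C}]$ is connected. The generalized line graph $\mathcal{L}(\mathsf{H}^\ast)$ has vertex set $\mathsf{H}^\ast$, with distinct $\mathrm{C},\mathrm{C}'$ joined iff $\mathrm{C}\cap\mathrm{C}'\neq\emptyset$; cycles are meant in the usual graph-theoretic sense. Fix $b\ge1$. A clique-gossip matrix for a clique $\mathrm{C}$ is a block matrix $\mathbf{M}_{\mathrm{C}}\in\mathbb{R}^{nb\times nb}$ with $b\times b$ blocks, whose $(i,j)$ block equals an arbitrary matrix $\mathbf{A}_{ij}(\mathrm{C})\in\mathbb{R}^{b\times b}$ when $i,j\in\mathrm{C}$, equals $\mathbf{I}_b$ when $i=j\notin\mathrm{C}$, and equals $\mathbf{0}_b$ otherwise. *)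

From HB Require Import structures.
From mathcomp Require Import all_boot all_order all_algebra all_fingroup.
Set Implicit Arguments. Unset Strict Implicit. Unset Printing Implicit Defensive.
Import Order.TTheory GRing.Theory Num.Theory.
Local Open Scope ring_scope.

(* Graph G = (V,E) with V = 'I_n, E given by a symmetric irreflexive relation e. *)

Definition is_clique (n : nat) (e : rel 'I_n) (C : {set 'I_n}) : Prop :=
  forall i j, i \in C -> j \in C -> i != j -> e i j.

Definition union_rel (n : nat) (H : {set {set 'I_n}}) : rel 'I_n :=
  fun i j => (i != j) && [exists C in H, (i \in C) && (j \in C)].

Definition clique_coverage (n : nat) (e : rel 'I_n) (H : {set {set 'I_n}}) : Prop :=
  [/\ forall C, C \in H -> is_clique e C,
      \bigcup_(C in H) C = [set: 'I_n]
    & forall i j : 'I_n, connect (union_rel H) i j].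

Definition lg_adj (n : nat) (C C' : {set 'I_n}) : bool :=
  (C != C') && (C :&: C' != set0).

Definition line_graph_acyclic (n : nat) (H : {set {set 'I_n}}) : Prop :=
  ~ exists p : seq {set 'I_n},
      [/\ all (fun C => C \in H) p, uniq p, (3 <= size p)%N & path.cycle (@lg_adj n) p].

Lemma sum_const_nb (n b : nat) : (\sum_(i < n) b)%N = (n * b)%N.
Proof. by rewrite sum_nat_const card_ord. Qed.

Definition gossip_mx (R : pzRingType) (n b : nat)
  (A : {set 'I_n} -> 'I_n -> 'I_n -> 'M[R]_b) (C : {set 'I_n}) : 'M[R]_(n * b) :=
  castmx (sum_const_nb n b, sum_const_nb n b)
    (\mxblock_(i < n, j < n)
       (if (i \in C) && (j \in C) then A C i j
        else if i == j then (1%:M : 'M[R]_b) else 0)).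

(* Ordered product M_{s_k} ... M_{s_1} for s = [:: s_1; ...; s_k]. *)
Definition ordered_prod (R : pzRingType) (m : nat) (I : Type)
  (M : I -> 'M[R]_m) (s : seq I) : 'M[R]_m :=
  foldl (fun acc i => M i *m acc) 1%:M s.

(* If two cliques are disjoint, their gossip matrices commute: M_C = I + E_C with
   E_C supported on the blocks C x C, and E_C E_C' = 0.  Hence M_{Q_i} and M_{Q_j}
   commute whenever Q_i and Q_j are not adjacent in the line graph, which is a
   forest.  A forest with two vertices or more has a vertex v adjacent to at most
   one other vertex u.  Since char_poly (A B) = char_poly (B A), the product may be
   rotated to start with M_v, and M_v then slides past every factor up to M_u;
   so in every ordering the characteristic polynomial is unchanged when v is
   deleted and M_u is replaced by M_u M_v.  The new family still commutes along
   the non-edges of the forest minus v, and induction on the number of factors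
   concludes. *)

From HB Require Import structures.
From mathcomp Require Import all_boot all_order all_algebra all_fingroup.
Set Implicit Arguments.
Unset Strict Implicit.
Unset Printing Implicit Defensive.
Import Order.TTheory GRing.Theory Num.Theory.
Local Open Scope ring_scope.

Lemma det_scalar_sub_mulmxC (R : idomainType) m (x : R) (A B : 'M[R]_m) :
  x != 0 -> \det (x%:M - A *m B) = \det (x%:M - B *m A).
Proof.
move=> x_neq0.
pose P := block_mx (x%:M : 'M_m) A B 1%:M.
pose L := block_mx (1%:M : 'M_m) 0 (- B) x%:M.
have LP : L *m P = block_mx x%:M A 0 (x%:M - B *m A).
  rewrite /L /P mulmx_block !mul1mx !mul0mx !addr0 mulmx1 mulNmx.
  by rewrite mul_mx_scalar mul_scalar_mx addNr addrC mulNmx.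
have PL : P *m L = block_mx (x%:M - A *m B) (x *: A) 0 x%:M.
  rewrite /L /P mulmx_block !mulmx1 !mulmx0 !add0r mulmxN.
  by rewrite mul_mx_scalar mul_scalar_mx scale1r subrr mul1mx.
have detL : \det L = x ^+ m by rewrite det_lblock det1 det_scalar mul1r.
have xm_neq0 : x ^+ m != 0 by rewrite expf_neq0.
have := congr1 determinant LP; rewrite det_mulmx det_ublock detL det_scalar => E1.
have := congr1 determinant PL; rewrite det_mulmx det_ublock detL det_scalar => E2.
by apply: (mulIf xm_neq0); rewrite -E2 mulrC E1 mulrC.
Qed.

Lemma char_poly_mulmxC (R : idomainType) m (A B : 'M[R]_m) :
  char_poly (A *m B) = char_poly (B *m A).
Proof.
rewrite /char_poly /char_poly_mx !map_mxM.
by apply: det_scalar_sub_mulmxC; rewrite polyX_eq0.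
Qed.

Lemma rem_cat_cons (T : eqType) (x : T) s1 s2 :
  x \notin s1 -> rem x (s1 ++ x :: s2) = s1 ++ s2.
Proof.
elim: s1 => [|y s1 IHs1] /=; first by rewrite eqxx.
by rewrite inE negb_or => /andP[xy /IHs1->]; rewrite eq_sym (negbTE xy).
Qed.

Section OrderedProduct.
Variables (R : pzRingType) (m : nat) (I : eqType).
Implicit Types (X : I -> 'M[R]_m) (s t : seq I).

Lemma foldl_ordered_prod X s (M : 'M[R]_m) :
  foldl (fun acc i => X i *m acc) M s = ordered_prod X s *m M.
Proof.
rewrite /ordered_prod; elim: s M => [|i s IHs] M /=; first by rewrite mul1mx.
by rewrite IHs [in RHS]IHs mulmx1 mulmxA.
Qed.

Lemma ordered_prod_cat X s t :
  ordered_prod X (s ++ t) = ordered_prod X t *m ordered_prod X s.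
Proof. by rewrite {1}/ordered_prod foldl_cat foldl_ordered_prod. Qed.

Lemma ordered_prod_cons X i s :
  ordered_prod X (i :: s) = ordered_prod X s *m X i.
Proof. by rewrite -cat1s ordered_prod_cat /ordered_prod /= mulmx1. Qed.

Lemma eq_ordered_prod X X' s : {in s, X =1 X'} ->
  ordered_prod X s = ordered_prod X' s.
Proof.
elim: s => [|i s IHs] // eqX; rewrite !ordered_prod_cons eqX ?mem_head // IHs //.
by move=> j js; rewrite eqX // inE js orbT.
Qed.

Lemma commute_ordered_prod X (M : 'M[R]_m) s :
  {in s, forall j, M *m X j = X j *m M} ->
  M *m ordered_prod X s = ordered_prod X s *m M.
Proof.
elim: s => [|i s IHs] commM; first by rewrite mulmx1 mul1mx.
rewrite ordered_prod_cons mulmxA IHs; last by move=> j js; rewrite commM // inE js orbT.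
by rewrite -!mulmxA commM ?mem_head.
Qed.

Definition fuse X (u v : I) : I -> 'M[R]_m :=
  fun i => if i == u then X u *m X v else X i.

Lemma ordered_prod_fuse X u v s t : u \notin s -> u \notin t ->
  {in s, forall j, X v *m X j = X j *m X v} ->
  ordered_prod X (v :: s ++ u :: t) = ordered_prod (fuse X u v) (s ++ u :: t).
Proof.
move=> us ut commv.
have fuseE r : u \notin r -> ordered_prod (fuse X u v) r = ordered_prod X r.
  move=> ur; apply: eq_ordered_prod => j jr; rewrite /fuse.
  by case: eqP => // ju; rewrite -ju jr in ur.
rewrite ordered_prod_cons !ordered_prod_cat !ordered_prod_cons !fuseE // /fuse eqxx.
by rewrite -!mulmxA (commute_ordered_prod commv).
Qed.

End OrderedProduct.

Section CharPolyOrderedProduct.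
Variables (R : idomainType) (m : nat) (I : eqType).
Implicit Types (X : I -> 'M[R]_m) (s t : seq I).

Lemma char_poly_ordered_prod_catC X s t :
  char_poly (ordered_prod X (s ++ t)) = char_poly (ordered_prod X (t ++ s)).
Proof. by rewrite !ordered_prod_cat char_poly_mulmxC. Qed.

Lemma char_poly_ordered_prod_fuse X u v s : uniq s -> u \in s -> v \in s -> u != v ->
  {in s, forall j, j != u -> j != v -> X v *m X j = X j *m X v} ->
  char_poly (ordered_prod X s) = char_poly (ordered_prod (fuse X u v) (rem v s)).
Proof.
move=> s_uniq us vs uv commv; case/splitPr: vs => a b in s_uniq us commv *.
have s_perm : perm_eq (a ++ v :: b) (v :: b ++ a) by rewrite perm_catC.
have /andP[vba ba_uniq] : (v \notin b ++ a) && uniq (b ++ a).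
  by rewrite -cons_uniq -(perm_uniq s_perm).
have memba j : (j \in b ++ a) = (j \in a ++ v :: b) && (j != v).
  by rewrite (perm_mem s_perm) inE; case: eqVneq => [->|]; rewrite ?(negbTE vba) ?andbT.
rewrite rem_cat_cons; last by apply: contra vba; rewrite mem_cat orbC => ->.
rewrite char_poly_ordered_prod_catC [RHS]char_poly_ordered_prod_catC cat_cons.
have uba : u \in b ++ a by rewrite memba us.
case/splitPr: uba => c d in vba ba_uniq memba *.
move: ba_uniq; rewrite cat_uniq /= => /and3P[_ /norP[uc _] /andP[ud _]].
rewrite ordered_prod_fuse // => j jc.
have := memba j; rewrite mem_cat jc => /esym/andP[js jv].
exact: commv js ((memPn uc) j jc) jv.
Qed.

End CharPolyOrderedProduct.

Section AcyclicGraph.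
Variables (I : eqType) (adj : rel I).
Hypothesis adj_sym : symmetric adj.
Implicit Types (s p r : seq I) (u v w x y : I).

Definition acyclic_on s : Prop :=
  ~ exists2 p, {subset p <= s} & [/\ uniq p, (3 <= size p)%N & path.cycle adj p].

Lemma sub_acyclic_on s1 s2 : {subset s1 <= s2} -> acyclic_on s2 -> acyclic_on s1.
Proof. by move=> s12 acyc2 [p ps1 cyc]; apply: acyc2; exists p => // z /ps1/s12. Qed.

Definition simple_path_in s v r : Prop :=
  [/\ {subset v :: r <= s}, uniq (v :: r) & path adj v r].

Definition pendant_in s v u : Prop :=
  [/\ v \in s, u \in s, u != v & {in s, forall j, j != u -> j != v -> ~~ adj v j}].

Lemma chord_cycle v w j r : uniq (v :: w :: r) -> path adj v (w :: r) ->
  j \in r -> adj v j -> exists2 p, {subset p <= v :: w :: r} &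
  [/\ uniq p, (3 <= size p)%N & path.cycle adj p].
Proof.
move=> + + jr; case/splitPr: jr => r1 r2.
rewrite -cat_rcons -!cat_cons => q_uniq q_path vj.
exists (v :: w :: rcons r1 j) => [z|]; first by rewrite mem_cat => ->.
split; first by move: q_uniq; rewrite cat_uniq => /andP[].
  by rewrite /= size_rcons.
move: q_path; rewrite cat_path => /andP[vwj _].
by rewrite /path.cycle rcons_path vwj /= last_rcons adj_sym.
Qed.

Lemma pendant_or_extend s x y v r : acyclic_on s ->
  x \in s -> y \in s -> x != y -> simple_path_in s v r ->
  (exists u, pendant_in s v u) \/ exists w, simple_path_in s w (v :: r).
Proof.
move=> acyc xs ys xy [vrs vr_uniq vr_path].
have vs : v \in s by rewrite vrs ?mem_head.
have [/hasP[j js /andP[vj jvr]]|/hasPn no_ext] :=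
  boolP (has (fun j => adj v j && (j \notin v :: r)) s).
  right; exists j; split; [|by rewrite /= jvr|by rewrite /= adj_sym vj].
  by move=> z; rewrite inE => /predU1P[->|/vrs].
left; have nbr_in j : j \in s -> adj v j -> j \in v :: r.
  by move=> js vj; have := no_ext j js; rewrite vj negbK.
clear no_ext; case: r => [|w r] in vrs vr_uniq vr_path nbr_in *.
  exists (if x == v then y else x); split=> //; first by case: ifP.
    by case: (eqVneq x v) => [<-|]; rewrite // eq_sym.
  by move=> j js _ jv; apply: contraNN jv => /(nbr_in j js); rewrite inE.
exists w; split=> //; first by rewrite vrs // !inE eqxx orbT.
  by move: vr_uniq; rewrite /= inE negb_or eq_sym => /andP[/andP[]].
move=> j js jw jv; apply/negP => vj; apply: acyc.
have := nbr_in j js vj; rewrite !inE (negbTE jv) (negbTE jw) /= => jr.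
have [p pvwr p_cyc] := chord_cycle vr_uniq vr_path jr vj.
by exists p => // z /pvwr/vrs.
Qed.

(* A simple path with size s edges cannot exist, so growing one from x must
   get stuck at a pendant endpoint. *)
Lemma exists_pendant s x y : acyclic_on s -> x \in s -> y \in s -> x != y ->
  exists v u, pendant_in s v u.
Proof.
move=> acyc xs ys xy.
suff [//|[v [r [[vrs vr_uniq _] size_r]]]] :
    (exists v u, pendant_in s v u) \/
    exists v r, simple_path_in s v r /\ size r = size s.
  by have := uniq_leq_size vr_uniq vrs; rewrite /= size_r ltnn.
elim: (size s) => [|k [pend|[v [r [vr size_r]]]]].
- by right; exists x, [::]; split=> //; split=> // z; rewrite inE => /eqP->.
- by left.
- have [[u ?]|[w ?]] := pendant_or_extend acyc xs ys xy vr; first by left; exists v, u.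
  by right; exists w, (v :: r); rewrite /= size_r.
Qed.

End AcyclicGraph.

Section CommutationGraph.
Variables (R : idomainType) (m : nat) (I : eqType) (adj : rel I).
Hypothesis adj_sym : symmetric adj.
Implicit Types (X : I -> 'M[R]_m) (s t : seq I).

Definition commute_nonadj X s : Prop :=
  {in s &, forall i j, i != j -> ~~ adj i j -> X i *m X j = X j *m X i}.

Lemma pendant_commute X s v u : commute_nonadj X s -> pendant_in adj s v u ->
  {in s, forall j, j != u -> j != v -> X v *m X j = X j *m X v}.
Proof.
move=> commX [vs _ _ v_pend] j js ju jv.
by apply: commX; rewrite // ?v_pend // eq_sym.
Qed.

Lemma commute_nonadj_fuse X s v u : uniq s -> commute_nonadj X s ->
  pendant_in adj s v u -> commute_nonadj (fuse X u v) (rem v s).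
Proof.
move=> s_uniq commX pend; have [vs us _ _] := pend.
have commv := pendant_commute commX pend.
have commuv j : j \in s -> j != u -> j != v -> ~~ adj u j ->
    X u *m X v *m X j = X j *m (X u *m X v).
  by move=> js ju jv uj; rewrite -mulmxA commv // !mulmxA commX // eq_sym.
move=> i j; rewrite !(mem_rem_uniq _ s_uniq) !inE.
move=> /andP[iv si] /andP[jv sj] ij nij; rewrite /fuse.
case: (eqVneq i u) => [iu|iu]; case: (eqVneq j u) => [ju|ju].
- by rewrite iu ju eqxx in ij.
- by rewrite iu in nij *; apply: commuv.
- by rewrite (commuv i) // adj_sym -ju.
- exact: commX si sj ij nij.
Qed.

Lemma char_poly_ordered_prod_perm X s t : uniq s -> perm_eq s t ->
  commute_nonadj X s -> acyclic_on adj s ->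
  char_poly (ordered_prod X s) = char_poly (ordered_prod X t).
Proof.
move sk: (size s) => k; elim: k => [|k IHk] in X s t sk *.
  by move/size0nil: sk => -> _ /perm_size/esym/size0nil->.
case: s sk => [//|x [|y s']] sk s_uniq st commX acyc.
  by rewrite -(perm_small_eq _ st) // -(perm_size st).
set s := x :: y :: s' in sk s_uniq st commX acyc *.
have xy : x != y by move: s_uniq; rewrite /= inE negb_or => /andP[/andP[]].
have ys : y \in s by rewrite !inE eqxx orbT.
have [v [u pend]] := exists_pendant adj_sym acyc (mem_head x _) ys xy.
have [vs us uv _] := pend.
have st_mem := perm_mem st.
have t_uniq : uniq t by rewrite -(perm_uniq st).
rewrite (char_poly_ordered_prod_fuse s_uniq us vs uv (pendant_commute commX pend)).
rewrite (char_poly_ordered_prod_fuse t_uniq _ _ uv) -?st_mem //; last first.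
  by move=> j; rewrite -st_mem; apply: pendant_commute commX pend j.
apply: IHk.
- by rewrite size_rem // sk.
- exact: rem_uniq.
- have vt : v \in t by rewrite -st_mem.
  rewrite -(perm_cons v) -(permPl (perm_to_rem vs)).
  by rewrite -(permPr (perm_to_rem vt)).
- exact: commute_nonadj_fuse.
- exact: sub_acyclic_on (@mem_rem _ v s) acyc.
Qed.

End CommutationGraph.

Lemma mulmx_castmx (R : pzRingType) m1 m2 (e : m1 = m2) (M N : 'M[R]_m1) :
  castmx (e, e) M *m castmx (e, e) N = castmx (e, e) (M *m N).
Proof. by case: m2 / e. Qed.

Section GossipMatrices.
Variables (R : pzRingType) (n b : nat) (A : {set 'I_n} -> 'I_n -> 'I_n -> 'M[R]_b).
Implicit Types (C : {set 'I_n}).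

Definition clique_part C : 'M[R]_(\sum_(i < n) b) :=
  \mxblock_(i, j) (if (i \in C) && (j \in C) then A C i j - (i == j)%:R%:M else 0).

Lemma gossip_mxE C : gossip_mx A C =
  castmx (sum_const_nb n b, sum_const_nb n b) (1%:M + clique_part C).
Proof.
rewrite /gossip_mx /clique_part -(mxdiagZ (p_ := fun=> b) 1) -mxblockD.
congr castmx; apply/eq_mxblock => i j; rewrite conform_mx_id.
case: ifP => _; case: eqVneq => _; rewrite /= ?raddf0 ?addr0 ?add0r ?subr0 //.
by rewrite addrC subrK.
Qed.

Lemma clique_part_mul_disjoint C C' : [disjoint C & C'] ->
  clique_part C *m clique_part C' = 0.
Proof.
move=> CC'; rewrite mul_mxblock -mxblock0; apply/eq_mxblock => i k.
apply: big1 => j _; case: (boolP (j \in C)) => jC.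
  by rewrite (disjointFr CC' jC) mulmx0.
by rewrite andbF mul0mx.
Qed.

Lemma gossip_mx_disjoint_comm C C' : [disjoint C & C'] ->
  gossip_mx A C *m gossip_mx A C' = gossip_mx A C' *m gossip_mx A C.
Proof.
move=> CC'; rewrite !gossip_mxE !mulmx_castmx; congr castmx.
rewrite !(mulmxDl, mulmxDr) !(mul1mx, mulmx1) !clique_part_mul_disjoint //.
  by rewrite !addr0 -!addrA (addrC (clique_part C)).
by rewrite disjoint_sym.
Qed.

End GossipMatrices.

Theorem corollary1 (R : realFieldType) (n b d : nat) (e : rel 'I_n)
  (e_sym : symmetric e) (e_irr : irreflexive e)
  (H : {set {set 'I_n}}) (HH : clique_coverage e H) (Hd : #|H| = d)
  (Q : 'I_d -> {set 'I_n}) (Q_inj : injective Q) (QH : [set Q i | i : 'I_d] = H)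
  (A : {set 'I_n} -> 'I_n -> 'I_n -> 'M[R]_b)
  (Hacyc : line_graph_acyclic H) (pi : 'S_d) :
  char_poly (ordered_prod (fun i => gossip_mx A (Q i)) (enum 'I_d)) =
  char_poly (ordered_prod (fun i => gossip_mx A (Q i)) [seq pi i | i <- enum 'I_d]).
Proof.
pose adj : rel 'I_d := fun i j => lg_adj (Q i) (Q j).
have adj_sym : symmetric adj by move=> i j; rewrite /adj /lg_adj eq_sym setIC.
apply: (char_poly_ordered_prod_perm adj_sym (enum_uniq _)).
- apply: uniq_perm => [||i]; first exact: enum_uniq.
    by rewrite map_inj_uniq ?enum_uniq //; apply: perm_inj.
  rewrite mem_enum; apply/esym/mapP; exists (pi^-1 i)%g; first by rewrite mem_enum.
  by rewrite permKV.
- move=> i j _ _ ij; rewrite /adj /lg_adj (inj_eq Q_inj) ij negbK setI_eq0.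
  exact: gossip_mx_disjoint_comm.
- move=> [p _ [p_uniq p_size p_cyc]]; apply: Hacyc; exists (map Q p); split.
  + by apply/allP => _ /mapP[i _ ->]; rewrite -QH imset_f.
  + by rewrite map_inj_uniq.
  + by rewrite size_map.
  + by rewrite cycle_map.
Qed.
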